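(* Let $\mathfrak{sp}(2,\mathbb{R})$, the basis $(e_I)_{I=1}^{10}$, the dual left-invariant coframe $(e^I)$ on $\mathbf{Sp}(2,\mathbb{R})$ and the distribution $D_l$ be as in the context. Consider symmetric bilinear forms $g=\sum_{\mu,\nu=1}^{7} g_{\mu\nu}\, e^\mu\odot e^\nu$ on $\mathbf{Sp}(2,\mathbb{R})$ with real constant coefficients $g_{\mu\nu}=g_{\nu\mu}$. Then $\mathcal{L}_X g=0$ for all vector fields $X$ in $D_l$ if and only if $$g=g_{22}(e^2)^2+2g_{24}e^2\odot e^4+g_{44}(e^4)^2+2g_{35}(e^3\odot e^5-e^1\odot e^7)+2g_{26}e^2\odot e^6+2g_{46}e^4 \odot e^6+g_{66}(e^6)^2$$ for some real constants $g_{22},g_{24},g_{44},g_{35},g_{26},g_{46},g_{66}$.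
   Context: Realize $\mathfrak{sp}(2,\mathbb{R})$ as the real $4\times 4$ matrices $$E=\begin{pmatrix} a_5&a_7&a_9&2a_{10}\\ -a_4&a_6&a_8&a_9\\ a_2&a_3&-a_6&-a_7\\ -2a_1&a_2&a_4&-a_5\end{pmatrix},\qquad a_I\in\mathbb{R},$$ with bracket the matrix commutator and basis $E_I=\partial E/\partial a_I$, $I=1,\dots,10$. Put $e_1=E_2,\ e_2=E_3,\ e_3=E_4,\ e_4=E_6,\ e_5=E_7,\ e_6=E_8,\ e_7=E_9,\ e_8=E_1,\ e_9=E_5,\ e_{10}=E_{10}$, regarded as left-invariant vector fields on $\mathbf{Sp}(2,\mathbb{R})$, and let $(e^I)$ be the dual left-invariant 1-forms ($e_I\lrcorner e^J=\delta^J_I$). They satisfy ${\rm d} e^1=-e^1\wedge(e^4+e^9)+e^2\wedge e^3-2e^5\wedge e^8$, ${\rm d} e^2=-2e^1\wedge e^5-2e^2\wedge e^4$, ${\rm d} e^3=-e^1\wedge e^6+e^3\wedge(e^4-e^9)-2e^7\wedge e^8$, ${\rm d} e^4=e^1\wedge e^7+e^2\wedge e^6+e^3\wedge e^5$, ${\rm d} e^5=2e^1\wedge e^{10}+e^2\wedge e^7+e^5\wedge (e^9-e^4)$, ${\rm d} e^6=2e^3\wedge e^7-2e^4\wedge e^6$, ${\rm d} e^7=2e^3\wedge e^{10}-e^5\wedge e^6+e^7\wedge (e^4+e^9)$, ${\rm d} e^8=-e^1\wedge e^3-2e^8\wedge e^9$, ${\rm d} e^9=e^1\wedge e^7-e^3\wedge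 e^5-4e^8\wedge e^{10}$, ${\rm d} e^{10}=-e^5\wedge e^7-2e^9\wedge e^{10}$. $D_l$ is the (integrable) rank-3 distribution on $\mathbf{Sp}(2,\mathbb{R})$ spanned by $e_8,e_9,e_{10}$, i.e. the annihilator of $e^1,\dots,e^7$; its leaves are the cosets of the subgroup $\mathbf{SL}(2,\mathbb{R})_l$ with Lie algebra $\mathrm{Span}(E_1,E_5,E_{10})$. Notation: $e^I\odot e^J=\tfrac12(e^I\otimes e^J+e^J\otimes e^I)$, $(e^I)^2=e^I\odot e^I$. *)

From mathcomp Require Import all_boot all_order all_algebra.
From mathcomp Require Import reals.
Set Implicit Arguments. Unset Strict Implicit. Unset Printing Implicit Defensive.
Import Order.TTheory GRing.Theory Num.Theory.
Local Open Scope ring_scope.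

Section Sp2.
Variable R : realType.

(* The generic element E(a) of sp(2,R); a I is the coordinate a_I, I = 1..10. *)
Definition Emat (a : nat -> R) : 'M[R]_4 :=
  \matrix_(i < 4, j < 4)
    match nat_of_ord i, nat_of_ord j with
    | 0, 0 => a 5%N   | 0, 1 => a 7%N  | 0, 2 => a 9%N  | 0, 3 => 2 * a 10%N
    | 1, 0 => - a 4%N | 1, 1 => a 6%N  | 1, 2 => a 8%N  | 1, 3 => a 9%N
    | 2, 0 => a 2%N   | 2, 1 => a 3%N  | 2, 2 => - a 6%N | 2, 3 => - a 7%N
    | 3, 0 => -2 * a 1%N | 3, 1 => a 2%N | 3, 2 => a 4%N | _, _ => - a 5%N
    end.

Definition in_sp2 (M : 'M[R]_4) : Prop := exists a : nat -> R, M = Emat a.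

Definition Ebas (I : nat) : 'M[R]_4 := Emat (fun J => if J == I then 1 else 0).

(* relabelling e_i = E_{perm i} *)
Definition perm10 (i : nat) : nat :=
  match i with
  | 1 => 2 | 2 => 3 | 3 => 4 | 4 => 6 | 5 => 7
  | 6 => 8 | 7 => 9 | 8 => 1 | 9 => 5 | 10 => 10 | _ => 0
  end%N.

Definition ebas (i : nat) : 'M[R]_4 := Ebas (perm10 i).

Definition acoord (I : nat) (M : 'M[R]_4) : R :=
  match I with
  | 1 => - M (3%:R) (0%:R) / 2
  | 2 => M 2%:R 0%:R
  | 3 => M 2%:R 1%:R
  | 4 => - M 1%:R 0%:R
  | 5 => M 0%:R 0%:R
  | 6 => M 1%:R 1%:R
  | 7 => M 0%:R 1%:R
  | 8 => M 1%:R 2%:R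
  | 9 => M 0%:R 2%:R
  | 10 => M 0%:R 3%:R / 2
  | _ => 0%R
  end.

(* dual coframe e^i (at the identity, i.e. on left-invariant vector fields) *)
Definition ecov (i : nat) (M : 'M[R]_4) : R := acoord (perm10 i) M.

Definition odot (i j : nat) (Y Z : 'M[R]_4) : R :=
  (ecov i Y * ecov j Z + ecov j Y * ecov i Z) / 2.

Definition gform (G : nat -> nat -> R) (Y Z : 'M[R]_4) : R :=
  \sum_(1 <= mu < 8) \sum_(1 <= nu < 8) G mu nu * odot mu nu Y Z.

(* Lie bracket of left-invariant vector fields = matrix commutator *)
Definition lbr (X Y : 'M[R]_4) : 'M[R]_4 := X *m Y - Y *m X.

(* Lie derivative of a left-invariant symmetric 2-tensor h along the
   left-invariant field X, evaluated on left-invariant fields Y, Z: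
   (L_X h)(Y,Z) = X(h(Y,Z)) - h([X,Y],Z) - h(Y,[X,Z]), and h(Y,Z) is constant. *)
Definition lieD (X : 'M[R]_4) (h : 'M[R]_4 -> 'M[R]_4 -> R) (Y Z : 'M[R]_4) : R :=
  - h (lbr X Y) Z - h Y (lbr X Z).

Definition in_Dl (X : 'M[R]_4) : Prop :=
  exists c8 c9 c10 : R, X = c8 *: ebas 8 + c9 *: ebas 9 + c10 *: ebas 10.

End Sp2.

From mathcomp Require Import all_boot all_order all_algebra.
From mathcomp Require Import reals ring lra.
Import Order.TTheory GRing.Theory Num.Theory.
Local Open Scope ring_scope.

(* Invariance along D_l is infinitesimal ad-invariance of g under
   span(e_8, e_9, e_10), a linear system in the 28 coefficients g_{mu nu}.
   Testing it for ad e_8 and ad e_9 on pairs of basis vectors E_I, E_J gives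
   21 relations which leave exactly the seven-parameter family, and that family
   is ad-invariant by a direct computation in the coordinates a_I of sp(2,R). *)

Section Sp2Coordinates.
Variable R : realType.
Implicit Types (a b x y : nat -> R) (X Y Z : 'M[R]_4).

Lemma acoord_Emat a I : (1 <= I <= 10)%N -> acoord I (Emat a) = a I.
Proof.
by case: I => [//|[|[|[|[|[|[|[|[|[|[|//]]]]]]]]]]] _;
  rewrite /acoord /Emat !mxE //=; field.
Qed.

Lemma odot_Emat i j a b : (1 <= perm10 i <= 10)%N -> (1 <= perm10 j <= 10)%N ->
  odot i j (Emat a) (Emat b) =
  (a (perm10 i) * b (perm10 j) + a (perm10 j) * b (perm10 i)) / 2.
Proof. by move=> i_ok j_ok; rewrite /odot /ecov !acoord_Emat. Qed.

Definition wedge x y (i j : nat) : R := x i * y j - x j * y i.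

Definition sp2_bracket x y (I : nat) : R :=
  match I with
  | 1 => 2 * wedge x y 1 5 + wedge x y 2 4
  | 2 => - 2 * wedge x y 1 7 + wedge x y 2 5 + wedge x y 2 6 - wedge x y 3 4
  | 3 => 2 * wedge x y 2 7 + 2 * wedge x y 3 6
  | 4 => - 2 * wedge x y 1 9 + wedge x y 2 8 + wedge x y 4 5 - wedge x y 4 6
  | 5 => 4 * wedge x y 1 10 - wedge x y 2 9 + wedge x y 4 7
  | 6 => - wedge x y 2 9 - wedge x y 3 8 - wedge x y 4 7
  | 7 => - 2 * wedge x y 2 10 - wedge x y 3 9 + wedge x y 5 7 - wedge x y 6 7
  | 8 => - 2 * wedge x y 4 9 + 2 * wedge x y 6 8
  | 9 => - 2 * wedge x y 4 10 + wedge x y 5 9 + wedge x y 6 9 + wedge x y 7 8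
  | 10 => 2 * wedge x y 5 10 + wedge x y 7 9
  | _ => 0
  end.

Lemma lbr_Emat x y : lbr (Emat x) (Emat y) = Emat (sp2_bracket x y).
Proof.
apply/matrixP => i j; rewrite !mxE !big_ord_recr !big_ord0 /= !mxE.
by case: i => [[|[|[|[|//]]]] ?]; case: j => [[|[|[|[|//]]]] ?];
  rewrite /= /wedge; ring.
Qed.

Lemma lbr_sp2 X Y : in_sp2 X -> in_sp2 Y -> in_sp2 (lbr X Y).
Proof. by move=> [x ->] [y ->]; exists (sp2_bracket x y); exact: lbr_Emat. Qed.

Definition Dl_coords (c8 c9 c10 : R) (I : nat) : R :=
  match I with 1 => c8 | 5 => c9 | 10 => c10 | _ => 0 end.

Lemma Dl_Emat c8 c9 c10 :
  c8 *: ebas R 8 + c9 *: ebas R 9 + c10 *: ebas R 10 = Emat (Dl_coords c8 c9 c10).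
Proof.
apply/matrixP => i j; rewrite !mxE.
by case: i => [[|[|[|[|//]]]] ?]; case: j => [[|[|[|[|//]]]] ?]; rewrite /=; ring.
Qed.

Lemma Dl_sp2 X : in_Dl X -> in_sp2 X.
Proof. by move=> [c8 [c9 [c10 ->]]]; rewrite Dl_Emat; exists (Dl_coords c8 c9 c10). Qed.

Lemma lieD_ext X (h h' : 'M[R]_4 -> 'M[R]_4 -> R) Y Z :
  (forall U V, in_sp2 U -> in_sp2 V -> h U V = h' U V) ->
  in_sp2 X -> in_sp2 Y -> in_sp2 Z -> lieD X h Y Z = lieD X h' Y Z.
Proof. by move=> hh' spX spY spZ; rewrite /lieD !hh' //; apply: lbr_sp2. Qed.

Lemma Ebas_sp2 I : in_sp2 (Ebas R I).
Proof. by exists (fun J => if J == I then 1 else 0). Qed.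

Lemma ebas8_Dl : in_Dl (ebas R 8).
Proof. by exists 1, 0, 0; rewrite scale1r !scale0r !addr0. Qed.

Lemma ebas9_Dl : in_Dl (ebas R 9).
Proof. by exists 0, 1, 0; rewrite scale1r !scale0r add0r addr0. Qed.

Definition invariant_form (g22 g24 g44 g35 g26 g46 g66 : R) (Y Z : 'M[R]_4) : R :=
  g22 * odot 2 2 Y Z + 2 * g24 * odot 2 4 Y Z + g44 * odot 4 4 Y Z
  + 2 * g35 * (odot 3 5 Y Z - odot 1 7 Y Z)
  + 2 * g26 * odot 2 6 Y Z + 2 * g46 * odot 4 6 Y Z + g66 * odot 6 6 Y Z.

Lemma lieD_invariant_form g22 g24 g44 g35 g26 g46 g66 X Y Z :
  in_Dl X -> in_sp2 Y -> in_sp2 Z ->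
  lieD X (invariant_form g22 g24 g44 g35 g26 g46 g66) Y Z = 0.
Proof.
move=> [c8 [c9 [c10 ->]]] [a ->] [b ->].
by rewrite Dl_Emat /lieD !lbr_Emat /invariant_form !odot_Emat //= /wedge /=; field.
Qed.

Lemma perm10_bounds i : (1 <= i < 8)%N -> (1 <= perm10 i <= 10)%N.
Proof. by case: i => [|[|[|[|[|[|[|[|]]]]]]]]. Qed.

Section ConstantCoefficientForms.
Variable G : nat -> nat -> R.
Hypothesis Gsym :
  forall mu nu : nat, (1 <= mu <= 7)%N -> (1 <= nu <= 7)%N -> G mu nu = G nu mu.

Lemma gform_Emat a b :
  gform G (Emat a) (Emat b) =
  G 1%N 1%N * (a 2%N * b 2%N)
  + G 1%N 2%N * (a 2%N * b 3%N + a 3%N * b 2%N)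
  + G 1%N 3%N * (a 2%N * b 4%N + a 4%N * b 2%N)
  + G 1%N 4%N * (a 2%N * b 6%N + a 6%N * b 2%N)
  + G 1%N 5%N * (a 2%N * b 7%N + a 7%N * b 2%N)
  + G 1%N 6%N * (a 2%N * b 8%N + a 8%N * b 2%N)
  + G 1%N 7%N * (a 2%N * b 9%N + a 9%N * b 2%N)
  + G 2%N 2%N * (a 3%N * b 3%N)
  + G 2%N 3%N * (a 3%N * b 4%N + a 4%N * b 3%N)
  + G 2%N 4%N * (a 3%N * b 6%N + a 6%N * b 3%N)
  + G 2%N 5%N * (a 3%N * b 7%N + a 7%N * b 3%N)
  + G 2%N 6%N * (a 3%N * b 8%N + a 8%N * b 3%N)
  + G 2%N 7%N * (a 3%N * b 9%N + a 9%N * b 3%N)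
  + G 3%N 3%N * (a 4%N * b 4%N)
  + G 3%N 4%N * (a 4%N * b 6%N + a 6%N * b 4%N)
  + G 3%N 5%N * (a 4%N * b 7%N + a 7%N * b 4%N)
  + G 3%N 6%N * (a 4%N * b 8%N + a 8%N * b 4%N)
  + G 3%N 7%N * (a 4%N * b 9%N + a 9%N * b 4%N)
  + G 4%N 4%N * (a 6%N * b 6%N)
  + G 4%N 5%N * (a 6%N * b 7%N + a 7%N * b 6%N)
  + G 4%N 6%N * (a 6%N * b 8%N + a 8%N * b 6%N)
  + G 4%N 7%N * (a 6%N * b 9%N + a 9%N * b 6%N)
  + G 5%N 5%N * (a 7%N * b 7%N)
  + G 5%N 6%N * (a 7%N * b 8%N + a 8%N * b 7%N)
  + G 5%N 7%N * (a 7%N * b 9%N + a 9%N * b 7%N)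
  + G 6%N 6%N * (a 8%N * b 8%N)
  + G 6%N 7%N * (a 8%N * b 9%N + a 9%N * b 8%N)
  + G 7%N 7%N * (a 9%N * b 9%N).
Proof.
have -> : gform G (Emat a) (Emat b) = \sum_(1 <= mu < 8) \sum_(1 <= nu < 8)
    G (minn mu nu) (maxn mu nu) *
      ((a (perm10 mu) * b (perm10 nu) + a (perm10 nu) * b (perm10 mu)) / 2).
  apply: eq_big_nat => mu mu_rng; apply: eq_big_nat => nu nu_rng.
  rewrite odot_Emat ?perm10_bounds //.
  by case: leqP => _; rewrite // Gsym.
by rewrite /index_iota /= !big_cons !big_nil /=; field.
Qed.

Ltac solve_probe probe :=
  move: probe; rewrite /lieD /ebas /Ebas !lbr_Emat !gform_Emat /= /wedge /=; lra.

Lemma Dl_invariant_gformE :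
  (forall X, in_Dl X -> forall Y Z, in_sp2 Y -> in_sp2 Z -> lieD X (gform G) Y Z = 0) ->
  forall Y Z, in_sp2 Y -> in_sp2 Z ->
  gform G Y Z = invariant_form (G 2%N 2%N) (G 2%N 4%N) (G 4%N 4%N) (G 3%N 5%N)
                               (G 2%N 6%N) (G 4%N 6%N) (G 6%N 6%N) Y Z.
Proof.
move=> Ginv Y Z [a ->] [b ->].
have probe8 I J := Ginv _ ebas8_Dl _ _ (Ebas_sp2 I) (Ebas_sp2 J).
have probe9 I J := Ginv _ ebas9_Dl _ _ (Ebas_sp2 I) (Ebas_sp2 J).
(* probe8 I J (resp. probe9 I J) is the (E_I, E_J)-component of the invariance
   equation for e_8 = E_1 (resp. e_9 = E_5). *)
have G11 : G 1%N 1%N = 0 by solve_probe (probe8 2%N 7%N).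
have G13 : G 1%N 3%N = 0 by solve_probe (probe8 2%N 9%N).
have G12 : G 1%N 2%N = 0 by solve_probe (probe8 3%N 7%N).
have G23 : G 2%N 3%N = 0 by solve_probe (probe8 3%N 9%N).
have G33 : G 3%N 3%N = 0 by solve_probe (probe8 4%N 9%N).
have G14 : G 1%N 4%N = 0 by solve_probe (probe8 6%N 7%N).
have G34 : G 3%N 4%N = 0 by solve_probe (probe8 6%N 9%N).
have G15 : G 1%N 5%N = 0 by solve_probe (probe8 7%N 7%N).
have G16 : G 1%N 6%N = 0 by solve_probe (probe8 7%N 8%N).
have G36 : G 3%N 6%N = 0 by solve_probe (probe8 8%N 9%N).
have G37 : G 3%N 7%N = 0 by solve_probe (probe8 9%N 9%N).
have G17 : G 1%N 7%N = - G 3%N 5%N by solve_probe (probe8 7%N 9%N).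
have G25 : G 2%N 5%N = 0 by solve_probe (probe9 3%N 7%N).
have G27 : G 2%N 7%N = 0 by solve_probe (probe9 3%N 9%N).
have G45 : G 4%N 5%N = 0 by solve_probe (probe9 6%N 7%N).
have G47 : G 4%N 7%N = 0 by solve_probe (probe9 6%N 9%N).
have G55 : G 5%N 5%N = 0 by solve_probe (probe9 7%N 7%N).
have G56 : G 5%N 6%N = 0 by solve_probe (probe9 7%N 8%N).
have G57 : G 5%N 7%N = 0 by solve_probe (probe9 7%N 9%N).
have G67 : G 6%N 7%N = 0 by solve_probe (probe9 8%N 9%N).
have G77 : G 7%N 7%N = 0 by solve_probe (probe9 9%N 9%N).
rewrite gform_Emat /invariant_form !odot_Emat //=.
rewrite G11 G12 G13 G14 G15 G16 G17 G23 G25 G27 G33 G34 G36 G37.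
by rewrite G45 G47 G55 G56 G57 G67 G77; field.
Qed.

End ConstantCoefficientForms.
End Sp2Coordinates.

Theorem proposition3p1 (R : realType) (G : nat -> nat -> R)
  (Gsym : forall mu nu : nat, (1 <= mu <= 7)%N -> (1 <= nu <= 7)%N -> G mu nu = G nu mu) :
  (forall X : 'M[R]_4, in_Dl X ->
     forall Y Z : 'M[R]_4, in_sp2 Y -> in_sp2 Z -> lieD X (gform G) Y Z = 0)
  <->
  (exists g22 g24 g44 g35 g26 g46 g66 : R,
     forall Y Z : 'M[R]_4, in_sp2 Y -> in_sp2 Z ->
       gform G Y Z =
         g22 * odot 2 2 Y Z + 2 * g24 * odot 2 4 Y Z + g44 * odot 4 4 Y Z
         + 2 * g35 * (odot 3 5 Y Z - odot 1 7 Y Z)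
         + 2 * g26 * odot 2 6 Y Z + 2 * g46 * odot 4 6 Y Z + g66 * odot 6 6 Y Z).
Proof.
split=> [Ginv | [g22 [g24 [g44 [g35 [g26 [g46 [g66 gE]]]]]]] X X_Dl Y Z Y_sp2 Z_sp2].
  exists (G 2%N 2%N), (G 2%N 4%N), (G 4%N 4%N), (G 3%N 5%N).
  exists (G 2%N 6%N), (G 4%N 6%N), (G 6%N 6%N).
  exact: Dl_invariant_gformE Gsym Ginv.
have X_sp2 : in_sp2 X by exact: Dl_sp2.
rewrite (@lieD_ext _ _ _ (invariant_form _ g22 g24 g44 g35 g26 g46 g66) _ _ gE) //.
exact: lieD_invariant_form.
Qed.
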